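(* Let $n \ge 2$ be an integer, $M$ a real $n\times n$ matrix, $\alpha := \frac1n s(M)$, $\beta := \frac1n q(M)$, and $\kappa := \frac{n\beta - \alpha^2}{n-1}$. Then: if $\alpha^2 < \beta$: $|\det M| \le \beta^{n/2}$; if $\alpha^2 = \beta$: $|\det M| \le |\alpha|\kappa^{\frac{n-1}{2}} = \beta^{n/2}$; if $\alpha^2 > \beta$: $|\det M| \le |\alpha|\kappa^{\frac{n-1}{2}} < \beta^{n/2}$.
   Context: For a real matrix $M$, $s(M)$ denotes the sum of all entries of $M$ and $q(M)$ the sum of the squares of all entries of $M$. *)

(* Real numbers are modelled by an arbitrary real closed field. *)
From HB Require Import structures.
From mathcomp Require Import all_boot all_order all_algebra.
Set Implicit Arguments. Unset Strict Implicit. Unset Printing Implicit Defensive.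
Import Order.TTheory GRing.Theory Num.Theory.
Local Open Scope ring_scope.

Definition msum (R : rcfType) (n : nat) (M : 'M[R]_n) : R :=
  \sum_(i < n) \sum_(j < n) M i j.

Definition msq (R : rcfType) (n : nat) (M : 'M[R]_n) : R :=
  \sum_(i < n) \sum_(j < n) (M i j) ^+ 2.

(* Conjugating [M] by a reflection that sends a basis vector to the unit vector
   with equal entries preserves [\det M] and [q(M)] and moves the value
   [alpha = s(M) / n] of the quadratic form at that vector to a diagonal entry.
   Hadamard's inequality then bounds [\det M ^+ 2] by the product of the squared
   row norms [r_i], which sum to [n * beta], one of them being at least
   [alpha ^+ 2]. AM-GM gives [beta ^+ n]. When [beta < alpha ^+ 2], the row
   containing the corner is pinned: since [y |-> y * (S - y) ^+ (n - 1)]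
   decreases on [[S / n, S]], the product is at most [alpha ^+ 2 * kappa ^+ (n-1)],
   and strict AM-GM on [alpha ^+ 2] and [n - 1] copies of [kappa] (whose mean is
   [beta]) shows this is below [beta ^+ n]. *)

From HB Require Import structures.
From mathcomp Require Import all_boot all_order all_algebra.
From mathcomp Require Import ring lra.
Import Order.TTheory GRing.Theory Num.Theory.
Local Open Scope ring_scope.

Set Implicit Arguments. Unset Strict Implicit. Unset Printing Implicit Defensive.

Section Gram.

Variable R : realFieldType.

Definition sqnorm n (x : 'rV[R]_n) : R := \sum_j x 0 j ^+ 2.

Lemma mul_tr_sqnorm n (x : 'rV[R]_n) : x *m x^T = (sqnorm x)%:M.
Proof.
rewrite [LHS]mx11_scalar mxE; congr _%:M.
by apply: eq_bigr => j _; rewrite mxE expr2.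
Qed.

Lemma sqnorm_ge0 n (x : 'rV[R]_n) : 0 <= sqnorm x.
Proof. by apply: sumr_ge0 => j _; apply: sqr_ge0. Qed.

Lemma sqnorm0 n : sqnorm (0 : 'rV[R]_n) = 0.
Proof. by apply: big1 => j _; rewrite mxE expr0n. Qed.

Lemma sqnorm_eq0 n (x : 'rV[R]_n) : (sqnorm x == 0) = (x == 0).
Proof.
apply/idP/eqP => [/eqP x0 | ->]; last by rewrite sqnorm0.
apply/rowP => j; rewrite mxE; apply/eqP; rewrite -sqrf_eq0.
by move/psumr_eq0P: x0 => -> // i _; apply: sqr_ge0.
Qed.

Lemma sqr_le_sqnorm_row m n (A : 'M[R]_(m, n)) i j : A i j ^+ 2 <= sqnorm (row i A).
Proof.
rewrite /sqnorm (bigD1 j) //= mxE lerDl.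
by apply: sumr_ge0 => l _; apply: sqr_ge0.
Qed.

(* [w] is the component of [a] orthogonal to the rows of [B] when these are
   independent (Gram-Schmidt), and [0] when [B *m B^T] is singular. *)
Lemma det_gram_col_mx m n (a : 'rV[R]_n) (B : 'M[R]_(m, n)) :
  exists2 w : 'rV_n, sqnorm w <= sqnorm a &
    \det (col_mx a B *m (col_mx a B)^T) = sqnorm w * \det (B *m B^T).
Proof.
set G := B *m B^T.
have [/eqP/det0P [v v_neq0 vG] | detG_neq0] := eqVneq (\det G) 0.
  exists 0; first by rewrite sqnorm0 sqnorm_ge0.
  rewrite sqnorm0 mul0r; apply/eqP/det0P.
  have vB : v *m B = 0.
    have : v *m B *m (v *m B)^T = 0 by rewrite trmx_mul mulmxA -(mulmxA v) vG mul0mx.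
    rewrite mul_tr_sqnorm => /matrixP/(_ 0 0); rewrite !mxE eqxx mulr1n.
    by move/eqP; rewrite sqnorm_eq0 => /eqP.
  exists (row_mx 0 v); first by rewrite -[_ == 0]/(_) row_mx_eq0 negb_and v_neq0 orbT.
  by rewrite mulmxA mul_row_col mul0mx add0r vB mul0mx.
have G_unit : G \in unitmx by rewrite unitmxE unitfE.
pose c := a *m B^T *m invmx G.
pose w := a - c *m B.
have wB : w *m B^T = 0.
  by rewrite mulmxBl -mulmxA -/G -mulmxA mulVmx // mulmx1 subrr.
have Bw : B *m w^T = 0 by rewrite -(trmxK B) -trmx_mul wB trmx0.
exists w.
  have a_split : a = w + c *m B by rewrite subrK.
  suff -> : sqnorm a = sqnorm w + sqnorm (c *m B) by rewrite lerDl sqnorm_ge0.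
  have : a *m a^T = w *m w^T + c *m B *m (c *m B)^T.
    rewrite {1 2}a_split raddfD /= mulmxDl !mulmxDr trmx_mul mulmxA wB mul0mx.
    by rewrite addr0 -(mulmxA c) Bw mulmx0 add0r.
  rewrite !mul_tr_sqnorm -raddfD /= => /matrixP/(_ 0 0).
  by rewrite !mxE eqxx !mulr1n.
have -> : col_mx a B = block_mx 1%:M c 0 1%:M *m col_mx w B.
  by rewrite mul_block_col !mul1mx mul0mx add0r subrK.
rewrite trmx_mul mulmxA -(mulmxA _ (col_mx w B)) !det_mulmx det_tr.
rewrite det_ublock !det1 !mulr1 mul1r tr_col_mx mul_col_row wB Bw det_ublock.
by rewrite mul_tr_sqnorm det_scalar1.
Qed.

Lemma det_gram_hadamard m n (A : 'M[R]_(m, n)) :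
  0 <= \det (A *m A^T) <= \prod_i sqnorm (row i A).
Proof.
elim: m A => [|m IH] A; first by rewrite det_mx00 big_ord0 lexx ler01.
rewrite -(vsubmxK (A : 'M_(1 + m, n))); set a := usubmx _; set B := dsubmx _.
have [w le_wa ->] := det_gram_col_mx a B.
rewrite big_ord_recl (eq_bigr (fun i => sqnorm (row i B))) => [|i _]; last first.
  by rewrite -rshift1 (rowKd i a B).
rewrite (_ : ord0 = lshift m (ord0 : 'I_1)); last exact: val_inj.
rewrite (rowKu (ord0 : 'I_1) a B) row_id.
have /andP [detB_ge0 detB_le] := IH B.
by rewrite mulr_ge0 ?sqnorm_ge0 //= ler_pM ?sqnorm_ge0.
Qed.

Lemma reflection_exists n (u e : 'cV[R]_n) : u^T *m u = e^T *m e ->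
  exists H : 'M[R]_n, [/\ H^T = H, H *m H = 1%:M & H *m e = u].
Proof.
move=> uu_ee.
have [-> | u_neq_e] := eqVneq u e.
  by exists 1%:M; rewrite trmx1 !mul1mx.
pose v := u - e; pose c := sqnorm v^T.
have c_neq0 : c != 0 by rewrite sqnorm_eq0 trmx_eq0 subr_eq0.
have vv : v^T *m v = c%:M by rewrite -mul_tr_sqnorm trmxK.
have ve : v^T *m e = (- (c / 2))%:M.
  have eu_ue : e^T *m u = u^T *m e.
    by rewrite -[LHS]trmxK trmx_mul trmxK [u^T *m e]mx11_scalar tr_scalar_mx.
  have : c%:M = - (v^T *m e) *+ 2.
    rewrite -vv /v !mulmxBr [(u - e)^T]linearB /= !mulmxBl uu_ee eu_ue.
    by rewrite opprB mulr2n.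
  move=> /matrixP/(_ 0 0); rewrite !mxE eqxx !mulr1n => c_eq.
  by rewrite [LHS]mx11_scalar mxE c_eq; congr _%:M; lra.
pose H := 1%:M - (2 / c) *: (v *m v^T).
exists H; split.
- by rewrite /H linearB /= trmx1 linearZ /= trmx_mul trmxK.
- rewrite /H mulmxBl !mulmxBr mulmx1 mul1mx -!scalemxAl -!scalemxAr mulmx1.
  rewrite mulmxA -(mulmxA v) vv mul_mx_scalar -scalemxAl !scalerA.
  have -> : 2 / c * (2 / c * c) = 2 / c + 2 / c by field.
  set X := (2 / c) *: _; rewrite scalerDl -/X.
  have -> : X - (X + X) = - X by rewrite opprD addrA subrr add0r.
  by rewrite opprK subrK.
- rewrite /H mulmxBl mul1mx -scalemxAl -mulmxA ve mul_mx_scalar scalerA.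
  have -> : 2 / c * - (c / 2) = -1 by field.
  by rewrite scaleN1r opprK /v addrC subrK.
Qed.

End Gram.

Lemma sqrtrX (R : rcfType) (a : R) n : 0 <= a -> Num.sqrt (a ^+ n) = Num.sqrt a ^+ n.
Proof.
move=> a_ge0; elim: n => [|n IH]; first by rewrite !expr0 sqrtr1.
by rewrite !exprS sqrtrM // IH.
Qed.

Section Conjugation.

Variable R : rcfType.

Lemma msq_trace n (A : 'M[R]_n) : msq A = \tr (A *m A^T).
Proof.
rewrite /msq /mxtrace; apply: eq_bigr => i _; rewrite mxE.
by apply: eq_bigr => j _; rewrite mxE expr2.
Qed.

Lemma msq_sqnorm_row n (A : 'M[R]_n) : msq A = \sum_i sqnorm (row i A).
Proof. by apply: eq_bigr => i _; apply: eq_bigr => j _; rewrite mxE. Qed.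

Lemma msq_mul_orthogonal n (P Q M : 'M[R]_n) :
  P^T *m P = 1%:M -> Q *m Q^T = 1%:M -> msq (P *m M *m Q) = msq M.
Proof.
move=> PP QQ; rewrite !msq_trace !trmx_mul -!mulmxA (mulmxA Q) QQ mul1mx.
by rewrite mxtrace_mulC -!mulmxA PP mulmx1.
Qed.

Lemma quad_form_const n (M : 'M[R]_n) (t : R) :
  (const_mx t : 'cV_n)^T *m M *m const_mx t = (t ^+ 2 * msum M)%:M.
Proof.
rewrite [LHS]mx11_scalar; congr _%:M; rewrite mxE /msum exchange_big mulr_sumr.
apply: eq_bigr => j _; rewrite !mxE mulr_sumr mulr_suml; apply: eq_bigr => i _.
by rewrite !mxE; ring.
Qed.

Lemma exists_conj_corner_mean n (i0 : 'I_n) (M : 'M[R]_n) :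
  exists N : 'M[R]_n,
    [/\ \det N = \det M, msq N = msq M & N i0 i0 = msum M / n%:R].
Proof.
have n_gt0 : (0 : R) < n%:R by rewrite ltr0n (leq_ltn_trans (leq0n i0)).
pose t : R := (Num.sqrt n%:R)^-1.
have t2 : t ^+ 2 = n%:R^-1 by rewrite exprVn sqr_sqrtr // ltW.
pose u : 'cV[R]_n := const_mx t; pose e : 'cV[R]_n := delta_mx i0 0.
have ee : e^T *m e = 1%:M.
  by rewrite trmx_delta mul_delta_mx [LHS]mx11_scalar mxE !eqxx.
have uu : u^T *m u = 1%:M.
  rewrite [LHS]mx11_scalar mxE (eq_bigr (fun _ => t ^+ 2)) => [|j _]; last first.
    by rewrite !mxE expr2.
  by rewrite sumr_const card_ord -mulr_natl t2 mulfV ?gt_eqF.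
have [H [HT HH He]] := reflection_exists (etrans uu (esym ee)).
exists (H *m M *m H); split.
- by rewrite !det_mulmx mulrAC -det_mulmx HH det1 mul1r.
- by apply: msq_mul_orthogonal; rewrite ?HT.
- have corner : e^T *m (H *m M *m H) *m e = ((H *m M *m H) i0 i0)%:M.
    by rewrite trmx_delta -rowE -colE [LHS]mx11_scalar !mxE.
  move: (quad_form_const M t); rewrite -/u -He trmx_mul HT !mulmxA.
  rewrite !mulmxA in corner; rewrite corner t2 mulrC => /matrixP/(_ 0 0).
  by rewrite !mxE eqxx !mulr1n.
Qed.

Lemma hadamard_corner_weights n (i0 : 'I_n) (M : 'M[R]_n) :
  exists r : 'I_n -> R, [/\ forall i, 0 <= r i, \det M ^+ 2 <= \prod_i r i,
    \sum_i r i = msq M & (msum M / n%:R) ^+ 2 <= r i0].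
Proof.
have [N [detN msqN cornerN]] := exists_conj_corner_mean i0 M.
exists (fun i => sqnorm (row i N)); split.
- by move=> i; apply: sqnorm_ge0.
- rewrite -detN expr2 -{2}det_tr -det_mulmx.
  by have /andP [] := det_gram_hadamard N.
- by rewrite -msqN msq_sqnorm_row.
- by rewrite -cornerN sqr_le_sqnorm_row.
Qed.

End Conjugation.

Section AMGM.

Variable R : realFieldType.

Lemma prod_le_mean_pow n (E : 'I_n -> R) : (forall i, 0 <= E i) ->
  \prod_i E i <= ((\sum_i E i) / n%:R) ^+ n.
Proof.
by move=> E_ge0; have [] := @leif_AGM R _ 'I_n E (fun i _ => E_ge0 i); rewrite card_ord.
Qed.

Lemma leif_AGM_weighted k (x y : R) : (0 < k)%N -> 0 <= x -> 0 <= y ->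
  x * y ^+ k <= ((x + k%:R * y) / k.+1%:R) ^+ k.+1 ?= iff (x == y).
Proof.
move=> k_gt0 x_ge0 y_ge0.
pose E (i : 'I_k.+1) := if i == ord0 then x else y.
have E_ge0 i : 0 <= E i by rewrite /E; case: ifP.
have E0 : E ord0 = x by rewrite /E eqxx.
have Elift i : E (lift ord0 i) = y by rewrite /E eq_sym (negbTE (neq_lift _ _)).
have := @leif_AGM R _ 'I_k.+1 E (fun i _ => E_ge0 i).
rewrite card_ord !big_ord_recl E0.
under eq_bigr do rewrite Elift; under [X in _ + X]eq_bigr do rewrite Elift.
rewrite prodr_const sumr_const card_ord -[y *+ k]mulr_natl.
move=> [le_AGM eq_AGM]; split => //.
rewrite eq_AGM; apply/forall_inP/eqP => [all_eq | x_eq_y].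
  pose j := lift ord0 (Ordinal k_gt0).
  by have /forall_inP/(_ j isT)/eqP := all_eq ord0 isT; rewrite E0 Elift.
by move=> i _; apply/forall_inP => j _; rewrite /E x_eq_y !if_same.
Qed.

(* On [[S / k.+1, S]] the map [y |-> y * (S - y) ^+ k] is nonincreasing: apply
   the weighted AM-GM inequality to [y * (S - x)] and [k] copies of [x * (S - y)]. *)
Lemma mul_subXn_nonincreasing k (S x y : R) : (0 < k)%N -> 0 <= x ->
  S <= k.+1%:R * x -> x <= y -> y <= S -> y * (S - y) ^+ k <= x * (S - x) ^+ k.
Proof.
move=> k_gt0 x_ge0 le_S_kx le_xy le_yS.
have [-> // | y_neq_x] := eqVneq y x.
have lt_xy : x < y by rewrite lt_neqAle eq_sym y_neq_x.
have x_gt0 : 0 < x.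
  rewrite lt0r x_ge0 andbT; apply: contraTneq le_S_kx => x0.
  by rewrite x0 mulr0 -ltNge (lt_le_trans _ le_yS) // -x0.
set c := S - x; have c_gt0 : 0 < c by rewrite subr_gt0 (lt_le_trans lt_xy).
have a_ge0 : 0 <= y * c by rewrite mulr_ge0 ?(ltW c_gt0) ?(le_trans x_ge0 le_xy).
have b_ge0 : 0 <= (S - y) * x by rewrite mulr_ge0 ?subr_ge0.
have [le_AGM _] := leif_AGM_weighted k_gt0 a_ge0 b_ge0.
have mean_le : (y * c + k%:R * ((S - y) * x)) / k.+1%:R <= x * c.
  rewrite ler_pdivrMr ?ltr0Sn // -subr_ge0.
  have -> : x * c * k.+1%:R - (y * c + k%:R * ((S - y) * x)) =
            (y - x) * (k.+1%:R * x - S) by rewrite /c -natr1; ring.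
  by rewrite mulr_ge0 // subr_ge0 ?(ltW lt_xy).
have mean_ge0 : 0 <= (y * c + k%:R * ((S - y) * x)) / k.+1%:R.
  by rewrite divr_ge0 // addr_ge0 // mulr_ge0.
have AGM_le := le_trans le_AGM (lerXn2r k.+1 mean_ge0 (mulr_ge0 x_ge0 (ltW c_gt0)) mean_le).
rewrite -(ler_pM2r (mulr_gt0 (exprn_gt0 k x_gt0) c_gt0)).
have -> : y * (S - y) ^+ k * (x ^+ k * c) = y * c * ((S - y) * x) ^+ k.
  by rewrite exprMn; ring.
have -> : x * c ^+ k * (x ^+ k * c) = (x * c) ^+ k.+1 by rewrite exprMn !exprS; ring.
exact: AGM_le.
Qed.

Lemma prod_le_pinned k (E : 'I_k.+1 -> R) (i0 : 'I_k.+1) (x : R) :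
  (0 < k)%N -> (forall i, 0 <= E i) -> 0 <= x -> x <= E i0 ->
  \sum_i E i <= k.+1%:R * x ->
  \prod_i E i <= x * ((\sum_i E i - x) / k%:R) ^+ k.
Proof.
move=> k_gt0 E_ge0 x_ge0 le_x_E sum_le.
set S := \sum_i E i.
have S_split : S = E i0 + \sum_(i | i != i0) E i by rewrite /S (bigD1 i0).
have rest : \prod_(i | i != i0) E i <= ((S - E i0) / k%:R) ^+ k.
  have [+ _] := @leif_AGM R _ (predC1 i0) E (fun i _ => E_ge0 i).
  by rewrite cardC1 card_ord /= S_split addrC addKr.
rewrite (bigD1 i0) //=; apply: le_trans (ler_wpM2l (E_ge0 i0) rest) _.
rewrite !expr_div_n !mulrA ler_wpM2r ?invr_ge0 ?exprn_ge0 ?ler0n //.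
apply: mul_subXn_nonincreasing => //.
by rewrite S_split lerDl sumr_ge0.
Qed.

Lemma pinned_bound_lt_mean_pow k (a b : R) : (0 < k)%N -> 0 <= a ->
  b < a -> a <= k.+1%:R * b -> a * ((k.+1%:R * b - a) / k%:R) ^+ k < b ^+ k.+1.
Proof.
move=> k_gt0 a_ge0 lt_ba le_a_kb; set c := (_ / _).
have k_neq0 : k%:R != 0 :> R by rewrite pnatr_eq0 -lt0n.
have c_ge0 : 0 <= c by rewrite divr_ge0 ?subr_ge0.
have mean_ac : (a + k%:R * c) / k.+1%:R = b.
  by rewrite /c; field; rewrite k_neq0 addrC natr1 pnatr_eq0.
have [le_AGM eq_AGM] := leif_AGM_weighted k_gt0 a_ge0 c_ge0.
rewrite mean_ac in le_AGM eq_AGM; rewrite lt_neqAle le_AGM eq_AGM andbT.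
apply: contraTneq lt_ba => a_eq_c; rewrite -leNgt -mean_ac -a_eq_c.
by rewrite -[X in X + _]mul1r -mulrDl addrC natr1 mulrC mulKf ?pnatr_eq0.
Qed.

End AMGM.

Theorem mainTheorem5 (R : rcfType) (n : nat) (hn : (2 <= n)%N) (M : 'M[R]_n) :
  let alpha := msum M / n%:R in
  let beta := msq M / n%:R in
  let kappa := (n%:R * beta - alpha ^+ 2) / (n%:R - 1) in
  [/\ alpha ^+ 2 < beta -> `|\det M| <= Num.sqrt beta ^+ n,
      alpha ^+ 2 = beta ->
        `|\det M| <= `|alpha| * Num.sqrt kappa ^+ n.-1
        /\ `|alpha| * Num.sqrt kappa ^+ n.-1 = Num.sqrt beta ^+ n
    & beta < alpha ^+ 2 ->
        `|\det M| <= `|alpha| * Num.sqrt kappa ^+ n.-1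
        /\ `|alpha| * Num.sqrt kappa ^+ n.-1 < Num.sqrt beta ^+ n].
Proof.
case: n hn M => [// | k]; rewrite ltnS => k_gt0 M alpha beta kappa.
have [r [r_ge0 det_le msq_r alpha_le]] := hadamard_corner_weights ord0 M.
have mean_r : (\sum_i r i) / k.+1%:R = beta by rewrite msq_r.
have sum_r : \sum_i r i = k.+1%:R * beta by rewrite -mean_r mulrC divfK ?pnatr_eq0.
have alpha_le_sum : alpha ^+ 2 <= k.+1%:R * beta.
  by rewrite -sum_r (le_trans alpha_le) // (bigD1 ord0) //= lerDl sumr_ge0.
have kappaE : kappa = (k.+1%:R * beta - alpha ^+ 2) / k%:R.
  by rewrite /kappa (_ : k.+1%:R - 1 = k%:R) // -natr1 addrK.
have kappa_ge0 : 0 <= kappa by rewrite kappaE divr_ge0 ?subr_ge0.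
have beta_ge0 : 0 <= beta by rewrite -mean_r divr_ge0 ?sumr_ge0.
have det_le_beta : `|\det M| <= Num.sqrt beta ^+ k.+1.
  rewrite -sqrtr_sqr -sqrtrX // ler_wsqrtr // -mean_r (le_trans det_le) //.
  exact: prod_le_mean_pow.
have sqrt_bound : `|alpha| * Num.sqrt kappa ^+ k = Num.sqrt (alpha ^+ 2 * kappa ^+ k).
  by rewrite sqrtrM ?sqr_ge0 // sqrtr_sqr sqrtrX.
split=> // [alpha2_eq | lt_beta_alpha2] /=.
  have abs_alpha : `|alpha| = Num.sqrt beta by rewrite -sqrtr_sqr alpha2_eq.
  have kappa_eq : kappa = beta.
    by rewrite kappaE alpha2_eq -natr1; field; rewrite pnatr_eq0 -lt0n.
  by rewrite kappa_eq abs_alpha -exprS.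
have lt_bound : alpha ^+ 2 * kappa ^+ k < beta ^+ k.+1.
  by rewrite kappaE pinned_bound_lt_mean_pow ?sqr_ge0.
have bound_ge0 : 0 <= alpha ^+ 2 * kappa ^+ k by rewrite mulr_ge0 ?sqr_ge0 ?exprn_ge0.
split; last first.
  by rewrite sqrt_bound -sqrtrX // ltr_sqrt ?(le_lt_trans bound_ge0 lt_bound).
rewrite -sqrtr_sqr sqrt_bound ler_wsqrtr // (le_trans det_le) // kappaE -sum_r.
rewrite (prod_le_pinned (i0 := ord0)) ?sqr_ge0 // sum_r.
by rewrite ler_wpM2l ?ler0n ?ltW.
Qed.
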